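(* Let $G$ be a finite group of order $n$ with $n\not\equiv 1 \pmod 3$. Then the number of transversals of the Cayley table of $G$ is divisible by $3$.
   Context: The Cayley table of a finite group $G$ is the latin square with rows and columns indexed by the elements of $G$ whose entry in row $x$, column $y$ is $xy$. A transversal of a latin square of order $n$ is a set of $n$ cells, one from each row and one from each column, no two containing the same symbol. *)

From mathcomp Require Import all_boot all_fingroup.
Set Implicit Arguments. Unset Strict Implicit. Unset Printing Implicit Defensive.
Local Open Scope group_scope.

(* The Cayley table of the finite group gT: cell (x, y) contains x * y.
   A cell is a pair (row, column) : gT * gT. *)
Definition cayley_symbol (gT : finGroupType) (c : gT * gT) : gT := c.1 * c.2.

Definition is_cayley_transversal (gT : finGroupType) (T : {set gT * gT}) : bool :=
  [&& #|T| == #|gT|,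
      [forall x : gT, #|[set c in T | c.1 == x]| == 1%N],
      [forall y : gT, #|[set c in T | c.2 == y]| == 1%N] &
      [forall c in T, forall d in T,
         (cayley_symbol c == cayley_symbol d) ==> (c == d)]].

Definition num_cayley_transversals (gT : finGroupType) : nat :=
  #|[set T : {set gT * gT} | is_cayley_transversal T]|.

From mathcomp Require Import all_boot all_fingroup.
From mathcomp Require Import pgroup cyclic sylow.
Set Implicit Arguments. Unset Strict Implicit. Unset Printing Implicit Defensive.
Local Open Scope group_scope.

(* Let X be the set of transversals of the Cayley table of G
   (n = #|G|).  We exhibit a map F on sets of cells, with F^3 = id, which
   maps X to itself and fixes no transversal; the orbits of F on X then all
   have size 3, so 3 divides #|X|.  The counting tool, proved first, is the
   classical "mod p" lemma for p-group actions (pgroup_fix_mod): a map of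
   order dividing 3 on a stable set has as many fixed points as elements,
   modulo 3.  The file then characterises transversals by injectivity of
   the row, column and symbol maps, and studies the two maps F below.
   - If 3 | n, Cauchy's theorem gives g of order 3, and F translates every
     cell (x, y) to (g x, y).  A fixed transversal would contain two cells
     in the same column, which is impossible.
   - If n = 2 (mod 3), F is induced by the parastrophy
     (x, y) |-> (y, (x y)^-1), which permutes the roles of rows, columns and
     symbols.  On a fixed transversal T it acts with order dividing 3 and at
     most one fixed cell, namely (1, 1), since G has no element of order 3;
     hence n = #|T| = 0 or 1 (mod 3), a contradiction. *)

Lemma card_mod3_fix (T : finType) (f : T -> T) (A : {set T}) :
  (forall x, f (f (f x)) = x) -> {in A, forall x, f x \in A} ->
  #|A| = #|[set x in A | f x == x]| %[mod 3].
Proof.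
move=> f3 fA.
have f_inj : injective f := can_inj (g := f \o f) f3.
pose s := perm f_inj.
have s_cube : s ^+ 3 = 1.
  by apply/permP => x; rewrite !expgSr expg0 mul1g !permM !permE f3.
have s_3group : 3.-group <[s]>.
  rewrite /pgroup -orderE (pnat_dvd _ (pnat_id (isT : prime 3))) //.
  by rewrite order_dvdn s_cube.
have s_actsA : [acts <[s]>, on A | 'P].
  rewrite cycle_subG !inE /=; apply/subsetP => x xA.
  by rewrite inE /= apermE permE fA.
rewrite (pgroup_fix_mod s_3group s_actsA) afix_cycle.
suff -> : 'Fix_(A | 'P)[s] = [set x in A | f x == x] by [].
by apply/setP => x; rewrite !inE sub1set inE /= apermE permE.
Qed.

Lemma dvd3_card_free (T : finType) (f : T -> T) (A : {set T}) :
  (forall x, f (f (f x)) = x) -> {in A, forall x, f x \in A} ->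
  {in A, forall x, f x != x} -> 3 %| #|A|.
Proof.
move=> f3 fA f_free; apply/eqP; rewrite (card_mod3_fix f3 fA).
suff -> : [set x in A | f x == x] = set0 by rewrite cards0.
by apply/setP => x; rewrite !inE; apply/negbTE/andP => -[/f_free/negP].
Qed.

Lemma imset_cube (T : finType) (h : T -> T) (A : {set T}) :
  (forall x, h (h (h x)) = x) -> h @: (h @: (h @: A)) = A.
Proof.
move=> h3; rewrite -!imset_comp -[RHS]imset_id.
by apply: eq_imset => x; apply: h3.
Qed.

Lemma in_inj_imset (aT : finType) (rT : Type) (h : aT -> aT) (k : aT -> rT)
    (A : {set aT}) :
  {in A &, injective (k \o h)} -> {in h @: A &, injective k}.
Proof.
by move=> kh_inj _ _ /imsetP[a aA ->] /imsetP[b bA ->] /kh_inj ->.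
Qed.

Section Transversals.

Variable gT : finGroupType.
Implicit Types (T : {set gT * gT}) (c : gT * gT).

Lemma card_fibre_inj T (k : gT * gT -> gT) :
  #|T| = #|gT| -> {in T &, injective k} ->
  forall z, #|[set c in T | k c == z]| == 1%N.
Proof.
move=> cardT k_inj z.
have k_onto : k @: T = setT.
  by apply/eqP; rewrite eqEcard subsetT cardsT (card_in_imset k_inj) cardT leqnn.
have /imsetP[c cT ->] : z \in k @: T by rewrite k_onto inE.
apply/cards1P; exists c; apply/setP => d; rewrite !inE.
by apply/andP/eqP => [[dT /eqP /k_inj]|->]; [apply | rewrite cT eqxx].
Qed.

Lemma cayley_transversalP T :
  reflect [/\ #|T| = #|gT|, {in T &, injective fst}, {in T &, injective snd}
            & {in T &, injective (@cayley_symbol gT)}]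
          (is_cayley_transversal T).
Proof.
have fibre1 (k : gT * gT -> gT) c d :
    #|[set e in T | k e == k c]| == 1%N -> c \in T -> d \in T -> k c = k d ->
    c = d.
  move=> /cards1P[e fibre_e] cT dT kcd.
  have : c \in [set e in T | k e == k c] by rewrite !inE cT eqxx.
  have : d \in [set e in T | k e == k c] by rewrite !inE dT kcd eqxx.
  by rewrite fibre_e !inE => /eqP-> /eqP->.
apply: (iffP and4P) => [[/eqP cardT /forallP rows /forallP cols sym]|].
  split=> // [c d cT dT | c d cT dT | c d cT dT].
  - by apply: fibre1 (rows c.1) cT dT.
  - by apply: fibre1 (cols c.2) cT dT.
  - move=> sym_cd; have := forall_inP (forall_inP sym c cT) d dT.
    by rewrite sym_cd eqxx => /eqP.
case=> cardT rows_inj cols_inj sym_inj; split; first by rewrite cardT.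
- by apply/forallP; apply: card_fibre_inj.
- by apply/forallP; apply: card_fibre_inj.
apply/forall_inP => c cT; apply/forall_inP => d dT.
by apply/implyP => /eqP /sym_inj -> //.
Qed.

Lemma transversal_nonempty T : is_cayley_transversal T -> exists c, c \in T.
Proof.
case/cayley_transversalP => cardT _ _ _; apply/card_gt0P.
by rewrite cardT; apply/card_gt0P; exists 1.
Qed.

Definition row_shift (g : gT) c : gT * gT := (g * c.1, c.2).

Lemma row_shift_cube g c :
  #[g] = 3 -> row_shift g (row_shift g (row_shift g c)) = c.
Proof.
move=> g_order; case: c => x y; rewrite /row_shift /= !mulgA -expg2 -expgSr.
by rewrite -g_order expg_order mul1g.
Qed.

Lemma row_shift_transversal g T :
  is_cayley_transversal T -> is_cayley_transversal (row_shift g @: T).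
Proof.
case/cayley_transversalP => cardT rows_inj cols_inj sym_inj.
apply/cayley_transversalP; split.
- by rewrite card_imset // => -[x y] [x' y'] [/mulgI -> ->].
- by apply: in_inj_imset => c d cT dT /= /mulgI; apply: rows_inj.
- by apply: in_inj_imset => c d cT dT /=; apply: cols_inj.
apply: in_inj_imset => c d cT dT; rewrite /comp /cayley_symbol /= -!mulgA.
by move/mulgI; apply: sym_inj.
Qed.

(* A nontrivial row translation fixes no transversal: it would map a cell
   of the transversal to another cell of it in the same column. *)
Lemma row_shift_moves g T :
  g != 1 -> is_cayley_transversal T -> row_shift g @: T != T.
Proof.
move=> g_nt transT; apply: contra g_nt => /eqP fixT.
have [c cT] := transversal_nonempty transT.
case/cayley_transversalP: transT => _ _ cols_inj _.
have gcT : row_shift g c \in T by rewrite -fixT imset_f.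
have /(congr1 fst) /= gc1 := cols_inj _ _ gcT cT erefl.
by rewrite -[X in _ = X]mul1g in gc1; rewrite (mulIg _ _ _ gc1).
Qed.

Definition rotate c : gT * gT := (c.2, (c.1 * c.2)^-1).

Lemma rotate_cube c : rotate (rotate (rotate c)) = c.
Proof.
case: c => x y; rewrite /rotate /=.
by rewrite !invMg !invgK mulKVg mulKg mulgK.
Qed.

(* Rows, columns and symbols of the rotated cell are the column, the
   inverse symbol and the inverse row of the original one. *)
Lemma rotate_transversal T :
  is_cayley_transversal T -> is_cayley_transversal (rotate @: T).
Proof.
case/cayley_transversalP => cardT rows_inj cols_inj sym_inj.
have sym_rotate c : cayley_symbol (rotate c) = c.1^-1.
  by rewrite /cayley_symbol /= invMg mulKVg.
apply/cayley_transversalP; split.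
- by rewrite card_imset //; apply: (can_inj (g := rotate \o rotate)) rotate_cube.
- by apply: in_inj_imset => c d cT dT /=; apply: cols_inj.
- by apply: in_inj_imset => c d cT dT /= /invg_inj; apply: sym_inj.
apply: in_inj_imset => c d cT dT; rewrite /comp !sym_rotate.
by move/invg_inj; apply: rows_inj.
Qed.

(* Without elements of order 3, the only cell fixed by the parastrophy is
   (1, 1): a fixed cell (x, x) has x^3 = 1. *)
Lemma rotate_fixed c : coprime 3 #|gT| -> rotate c = c -> c = (1, 1).
Proof.
case: c => x y co3 [yx xy]; subst y.
have x_cube : x ^+ 3 = 1 by rewrite !expgS expg0 mulg1 -{1}xy mulVg.
have : #[x] %| 1%N.
  rewrite -(eqP co3) dvdn_gcd order_dvdn x_cube -cardsT.
  by rewrite eqxx (order_dvdG (G := [set: gT]%G)) ?inE.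
by rewrite dvdn1 order_eq1 => /eqP ->.
Qed.

(* When n = 2 (mod 3), the parastrophy fixes no transversal T: otherwise it
   would permute T with at most one fixed cell, so #|T| = 0 or 1 (mod 3). *)
Lemma rotate_moves T :
  #|gT| %% 3 = 2 -> is_cayley_transversal T -> rotate @: T != T.
Proof.
move=> n_mod3 /cayley_transversalP[cardT _ _ _]; apply/eqP => fixT.
have co3 : coprime 3 #|gT| by rewrite prime_coprime // /dvdn n_mod3.
have stableT : {in T, forall c, rotate c \in T}.
  by move=> c cT; rewrite -fixT imset_f.
have fixed_sub : [set c in T | rotate c == c] \subset [set (1, 1)].
  by apply/subsetP => c; rewrite !inE => /andP[_ /eqP/(rotate_fixed co3) ->].
have := card_mod3_fix rotate_cube stableT; rewrite cardT n_mod3.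
have := subset_leq_card fixed_sub; rewrite cards1.
by case: #|_| => [|[|]].
Qed.

End Transversals.

Local Close Scope group_scope.

Theorem theorem4p7 (gT : finGroupType) :
  #|gT| %% 3 != 1 -> 3 %| num_cayley_transversals gT.
Proof.
move=> n_mod3; rewrite /num_cayley_transversals.
have transversal_orbits (h : gT * gT -> gT * gT) :
    (forall c, h (h (h c)) = c) ->
    (forall T, is_cayley_transversal T -> is_cayley_transversal (h @: T)) ->
    (forall T, is_cayley_transversal T -> h @: T != T) ->
    3 %| #|[set T : {set gT * gT} | is_cayley_transversal T]|.
  move=> h3 h_trans h_moves.
  apply: (dvd3_card_free (f := fun T : {set gT * gT} => h @: T)) => [T | T | T].
  - exact: imset_cube.
  - by rewrite !inE; apply: h_trans.
  - by rewrite inE; apply: h_moves.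
have [n_dvd3 | n_ndvd3] := boolP (3 %| #|gT|).
- rewrite -cardsT in n_dvd3.
  have [g _ g_order] := Cauchy (isT : prime 3) n_dvd3.
  apply: (transversal_orbits (row_shift g)).
  + by move=> c; apply: row_shift_cube.
  + exact: row_shift_transversal.
  + by move=> T; apply: row_shift_moves; rewrite -order_gt1 g_order.
have n_mod3_2 : #|gT| %% 3 = 2.
  move: n_mod3 n_ndvd3 (ltn_pmod #|gT| (isT : 0 < 3)); rewrite /dvdn.
  by case: (#|gT| %% 3) => [|[|[|]]].
apply: (transversal_orbits (@rotate gT)).
- exact: rotate_cube.
- exact: rotate_transversal.
- by move=> T; apply: rotate_moves.
Qed.
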